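(* Let $\alpha=(\alpha_n)_{n\in\mathbb{Z}}\in(k^\times)^{\mathbb{Z}}$, $\beta=(\beta_n)_{n\in\mathbb{Z}}\in k^{\mathbb{Z}}$, $r\in\mathbb{Z}$ and $s>1$. Then $$(\phi_\alpha\theta_r)\,\phi^{(s)}_\beta\,(\phi_\alpha\theta_r)^{-1}=\phi^{(s)}_{\alpha^{-1}\alpha^{-1}[1]\cdots\alpha^{-1}[s-1]\,\beta[-r]}.$$ In particular, $\phi_\alpha\phi^{(s)}_\beta\phi_\alpha^{-1}=\phi^{(s)}_{\alpha^{-1}\alpha^{-1}[1]\cdots\alpha^{-1}[s-1]\,\beta}$.
   Context: Let $k$ be a field and $0\neq q\in k$ not a root of unity. $H=k_q[x,x^{-1},y]$ is the $k$-algebra generated by $x,x^{-1},y$ with $xx^{-1}=x^{-1}x=1$, $yx=qxy$; $\{x^ny^m:n\in\mathbb{Z},m\in\mathbb{N}\}$ is a $k$-basis. For sequences in $k^{\mathbb{Z}}$ operations are componentwise; $\alpha^{-1}=(\alpha_n^{-1})_n$ and $\gamma[r]$ denotes the sequence with $\gamma[r]_n=\gamma_{n+r}$. $\theta_r$ is the linear map $x^ny^m\mapsto x^{n+r}y^m$; $\phi_\alpha$ is the linear map with $\phi_\alpha(x^n)=x^n$, $\phi_\alpha(x^ny^m)=(\prod_{i=0}^{m-1}\alpha_{n+i})x^ny^m$ for $m\ge1$. Let $(j)_q=1+q+\dots+q^{j-1}$, $(j)!_q=(j)_q\cdots(1)_q$, $\binom{m}{i}_q=\frac{(m)!_q}{(i)!_q(m-i)!_q}$,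 $\binom{m}{s}_{q,i}=\prod_{j=0}^{i-1}\binom{m-js}{s}_q$, and for $\beta\in k^{\mathbb{Z}}$, $\beta_{n,s;0}=1$, $\beta_{n,s;i}=\prod_{j=0}^{i-1}\beta_{n+js}$. For $s\ge2$, $\phi^{(s)}_\beta$ is the linear map $H\to H$ with $\phi^{(s)}_\beta(x^ny^m)=x^ny^m$ for $0\le m<s$ and, for $m\geq s$, $\phi^{(s)}_\beta(x^ny^m)=x^ny^m+\sum_{1\le i\le\lfloor m/s\rfloor}\binom{m}{s}_{q,i}\big(\beta_{n,s;i}x^{n+is}-\beta_{n,s;i-1}\beta_{n+m-s}x^{n+is-s}\big)y^{m-is}$. *)

From HB Require Import structures.
From mathcomp Require Import all_boot all_order all_algebra.
From mathcomp Require Import finmap.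
From mathcomp.multinomials Require Import monalg.
Set Implicit Arguments. Unset Strict Implicit. Unset Printing Implicit Defensive.
Import Order.TTheory GRing.Theory Num.Theory.
Local Open Scope ring_scope.

(* Underlying k-vector space of H = k_q[x,x^-1,y]: the free k-module on the
   basis {x^n y^m : n in Z, m in N}; the pair (n,m) stands for x^n y^m. *)
Definition Hsp (k : fieldType) := {malg k[(int * nat)%type]}.

Definition xy (k : fieldType) (n : int) (m : nat) : Hsp k := << (n, m) >>.

Definition linext (k : fieldType) (F : int -> nat -> Hsp k) (g : Hsp k) : Hsp k :=
  \sum_(b <- msupp g) g@_b *: F b.1 b.2.

Definition qint (k : fieldType) (q : k) (j : nat) : k := \sum_(i < j) q ^+ i.
Definition qfact (k : fieldType) (q : k) (j : nat) : k := \prod_(i < j) qint q i.+1.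
Definition qbinom (k : fieldType) (q : k) (m i : nat) : k :=
  qfact q m / (qfact q i * qfact q (m - i)).
Definition qbinomi (k : fieldType) (q : k) (m s i : nat) : k :=
  \prod_(j < i) qbinom q (m - j * s) s.
Definition bprod (k : fieldType) (beta : int -> k) (n : int) (s i : nat) : k :=
  \prod_(j < i) beta (n + (j * s)%N%:Z).

Definition theta (k : fieldType) (r : int) : Hsp k -> Hsp k :=
  linext (fun n m => xy k (n + r) m).

Definition phia (k : fieldType) (alpha : int -> k) : Hsp k -> Hsp k :=
  linext (fun n m => (\prod_(i < m) alpha (n + i%:Z)) *: xy k n m).

Definition phis (k : fieldType) (q : k) (s : nat) (beta : int -> k) : Hsp k -> Hsp k :=
  linext (fun n m =>
    if (m < s)%N then xy k n m
    else xy k n m +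
      \sum_(1 <= i < (m %/ s).+1)
        qbinomi q m s i *:
          (bprod beta n s i *: xy k (n + (i * s)%N%:Z) (m - i * s)
           - (bprod beta n s i.-1 * beta (n + m%:Z - s%:Z))
               *: xy k (n + (i * s)%N%:Z - s%:Z) (m - i * s))).

Definition conjseq (k : fieldType) (alpha beta : int -> k) (s : nat) (r : int)
  : int -> k :=
  fun n => (\prod_(j < s) (alpha (n + j%:Z))^-1) * beta (n - r).

From HB Require Import structures.
From mathcomp Require Import all_boot all_order all_algebra.
From mathcomp Require Import finmap.
From mathcomp.multinomials Require Import monalg.
From mathcomp Require Import ring zify.
Import Order.TTheory GRing.Theory Num.Theory.
Local Open Scope ring_scope.
Set Implicit Arguments. Unset Strict Implicit. Unset Printing Implicit Defensive.

(* All maps involved are linear extensions of their values on the monomials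
   x^n y^m, so it suffices to compare both sides on monomials.  There
   phi_alpha theta_r acts diagonally, x^n y^m |-> a(n+r,m) x^(n+r) y^m with
   a(n,m) = alpha_n ... alpha_(n+m-1), so conjugating the i-th summand of
   phi^(s)_beta only rescales its two coefficients by quotients of such
   products.  Since a(n, m) = a(n, is) a(n+is, m-is), these quotients are the
   partial products a(n, is)^-1 = prod_(j<i) a(n+js, s)^-1, which turn
   beta_(n-r,s;i) into gamma_(n,s;i) for gamma = alpha^-1 ... alpha^-1[s-1] beta[-r].
   Any two-sided inverse of phi_alpha theta_r agrees with the explicit one. *)

Section ProductsOfAlpha.
Variables (k : fieldType) (alpha beta : int -> k) (r : int) (s : nat).
Hypothesis alpha_neq0 : forall n, alpha n != 0.

Definition seqprod (n : int) (m : nat) : k := \prod_(i < m) alpha (n + i%:Z).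

Lemma seqprod_neq0 n m : seqprod n m != 0.
Proof. by apply/prodf_neq0 => i _. Qed.

Lemma seqprodD n a b : seqprod n (a + b) = seqprod n a * seqprod (n + a%:Z) b.
Proof.
rewrite /seqprod big_split_ord /=; congr (_ * _); apply: eq_bigr => i _.
by rewrite PoszD addrA.
Qed.

Lemma conjseqE n : conjseq alpha beta s r n = (seqprod n s)^-1 * beta (n - r).
Proof. by rewrite /conjseq /seqprod prodfV. Qed.

Lemma bprod_conjseq n i :
  bprod (conjseq alpha beta s r) n s i
  = (seqprod n (i * s))^-1 * bprod beta (n - r) s i.
Proof.
elim: i => [|i IHi]; first by rewrite /bprod /seqprod !big_ord0 invr1 mulr1.
rewrite /bprod !big_ord_recr /= -!/(bprod _ _ _ _) IHi conjseqE mulSn addnC.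
by rewrite seqprodD invfM addrAC; ring.
Qed.

(* The coefficient identities for the two monomials of the i-th summand of
   phi^(s), of x-degrees n + i s and n + i s - s. *)
Lemma conjseq_coef_top n m i : (i * s <= m)%N ->
  (seqprod n m)^-1 * bprod beta (n - r) s i * seqprod (n + (i * s)%N%:Z) (m - i * s)
  = bprod (conjseq alpha beta s r) n s i.
Proof.
move=> le_ism; rewrite bprod_conjseq -{1}(subnKC le_ism) seqprodD.
by field; rewrite !seqprod_neq0.
Qed.

Lemma conjseq_coef_bottom n m i : (0 < i)%N -> (i * s <= m)%N ->
  (seqprod n m)^-1 * (bprod beta (n - r) s i.-1 * beta (n - r + m%:Z - s%:Z))
    * seqprod (n + (i * s)%N%:Z - s%:Z) (m - i * s)
  = bprod (conjseq alpha beta s r) n s i.-1 * conjseq alpha beta s r (n + m%:Z - s%:Z).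
Proof.
case: i => // j _; rewrite mulSnr /= => le_m.
set d := (m - (j * s + s))%N.
have -> : m = (j * s + d + s)%N by rewrite /d; lia.
have -> : n + (j * s + s)%N%:Z - s%:Z = n + (j * s)%N%:Z by rewrite PoszD addrA addrK.
rewrite !seqprodD !PoszD conjseqE bprod_conjseq.
have -> : n - r + ((j * s)%:Z + d%:Z + s%:Z) - s%:Z = n + (j * s)%N%:Z + d%:Z - r by ring.
have -> : n + ((j * s)%:Z + d%:Z + s%:Z) - s%:Z = n + (j * s)%N%:Z + d%:Z by ring.
by rewrite !addrA; field; rewrite !seqprod_neq0.
Qed.

End ProductsOfAlpha.

Section LinearExtension.
Variable k : fieldType.
Implicit Types (F : int -> nat -> Hsp k) (g : Hsp k).

Lemma linextEw F g (d : {fset int * nat}) : (msupp g `<=` d)%fset ->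
  linext F g = \sum_(b <- d) g@_b *: F b.1 b.2.
Proof.
move=> le_gd; rewrite /linext [LHS](big_fset_incl _ le_gd) // => b _.
by move/mcoeff_outdom ->; rewrite scale0r.
Qed.

Lemma linext_is_linear F : linear (linext F).
Proof.
move=> a u v; set d := (msupp u `|` msupp v)%fset.
have le_d : (msupp (a *: u + v) `<=` d)%fset.
  apply: fsubset_trans (msuppD_le _ _) _; apply: fsetSU; exact: msuppZ_le.
rewrite !(linextEw F (d := d)) ?fsubsetUl ?fsubsetUr // scaler_sumr -big_split.
by apply: eq_bigr => b _; rewrite mcoeffD mcoeffZ scalerDl scalerA.
Qed.

HB.instance Definition _ F :=
  GRing.isLinear.Build k (Hsp k) (Hsp k) *:%R (linext F) (linext_is_linear F).

Lemma linext_xy F n m : linext F (xy k n m) = F n m.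
Proof. by rewrite /linext /xy msuppU oner_eq0 big_seq_fset1 mcoeffUU scale1r. Qed.

Lemma linear_xy_eq (f g : {linear Hsp k -> Hsp k}) :
  (forall n m, f (xy k n m) = g (xy k n m)) -> f =1 g.
Proof.
move=> fg u; rewrite (monalgE u) !linear_sum; apply: eq_bigr => -[n m] _.
have -> : << u@_(n, m) *g (n, m) >> = u@_(n, m) *: xy k n m.
  by apply/malgP => b; rewrite mcoeffZ !mcoeffU mulr_natr.
by rewrite !linearZ /= fg.
Qed.

End LinearExtension.


HB.instance Definition _ (k : fieldType) (r : int) :=
  GRing.Linear.copy (@theta k r) (linext _).
HB.instance Definition _ (k : fieldType) (alpha : int -> k) :=
  GRing.Linear.copy (phia alpha) (linext _).
HB.instance Definition _ (k : fieldType) (q : k) (s : nat) (beta : int -> k) :=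
  GRing.Linear.copy (phis q s beta) (linext _).

Definition phis_on (k : fieldType) (V : lmodType k) (e : int -> nat -> V)
    (q : k) (s : nat) (beta : int -> k) (n : int) (m : nat) : V :=
  if (m < s)%N then e n m
  else e n m +
    \sum_(1 <= i < (m %/ s).+1)
      qbinomi q m s i *:
        (bprod beta n s i *: e (n + (i * s)%N%:Z) (m - i * s)%N
         - (bprod beta n s i.-1 * beta (n + m%:Z - s%:Z))
             *: e (n + (i * s)%N%:Z - s%:Z) (m - i * s)%N).

Section BasisValues.
Variable k : fieldType.

Lemma theta_xy r n m : theta r (xy k n m) = xy k (n + r) m.
Proof. exact: linext_xy. Qed.

Lemma phia_xy alpha n m : phia alpha (xy k n m) = seqprod alpha n m *: xy k n m.
Proof. exact: linext_xy. Qed.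

Lemma phis_xy q s beta n m : phis q s beta (xy k n m) = phis_on (xy k) q s beta n m.
Proof. exact: linext_xy. Qed.

Lemma theta0 : @theta k 0 =1 id.
Proof. by apply: (linear_xy_eq (g := idfun)) => n m /=; rewrite theta_xy addr0. Qed.

End BasisValues.

Section ConjugateBasisFormula.
Variables (k : fieldType) (V : lmodType k) (e : int -> nat -> V).
Variables (alpha beta : int -> k) (q : k) (r : int) (s : nat).
Hypothesis alpha_neq0 : forall n, alpha n != 0.
Variable T : {linear V -> V}.
Hypothesis T_e : forall n m, T (e n m) = seqprod alpha (n + r) m *: e (n + r) m.

Lemma conj_phis_on n m :
  (seqprod alpha n m)^-1 *: T (phis_on e q s beta (n - r) m)
  = phis_on e q s (conjseq alpha beta s r) n m.
Proof.
rewrite /phis_on; case: ltnP => [_|le_sm].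
  by rewrite T_e subrK scalerA mulVf ?seqprod_neq0 ?scale1r.
rewrite linearD T_e subrK scalerDr scalerA mulVf ?seqprod_neq0 // scale1r.
congr (_ + _); rewrite linear_sum scaler_sumr.
apply: eq_big_nat => i /andP [i_gt0 i_le].
have le_ism : (i * s <= m)%N.
  by rewrite (leq_trans _ (leq_divM m s)) // leq_mul2r -ltnS i_le orbT.
rewrite linearZ_LR linearB !(linearZ_LR T) !T_e.
have -> : n - r + (i * s)%N%:Z + r = n + (i * s)%N%:Z by ring.
have -> : n - r + (i * s)%N%:Z - s%:Z + r = n + (i * s)%N%:Z - s%:Z by ring.
rewrite !scalerBr !scalerA; congr (_ *: _ - _ *: _).
- by rewrite -(conjseq_coef_top beta r alpha_neq0 n le_ism); ring.
- by rewrite -(conjseq_coef_bottom beta r alpha_neq0 n i_gt0 le_ism); ring.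
Qed.

End ConjugateBasisFormula.

Section Conjugation.
Variables (k : fieldType) (alpha : int -> k) (r : int).
Hypothesis alpha_neq0 : forall n, alpha n != 0.

Local Notation T := (phia alpha \o theta r).

Definition phia_theta_inv : Hsp k -> Hsp k :=
  linext (fun n m => (seqprod alpha n m)^-1 *: xy k (n - r) m).
HB.instance Definition _ := GRing.Linear.copy phia_theta_inv (linext _).

Lemma phia_theta_inv_xy n m :
  phia_theta_inv (xy k n m) = (seqprod alpha n m)^-1 *: xy k (n - r) m.
Proof. exact: linext_xy. Qed.

Lemma phia_theta_xy n m :
  phia alpha (theta r (xy k n m)) = seqprod alpha (n + r) m *: xy k (n + r) m.
Proof. by rewrite theta_xy phia_xy. Qed.

Lemma phia_thetaK : cancel T phia_theta_inv.
Proof.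
apply: (linear_xy_eq (f := phia_theta_inv \o T) (g := idfun)) => n m /=.
rewrite phia_theta_xy linearZ /= phia_theta_inv_xy addrK scalerA.
by rewrite mulfV ?seqprod_neq0 ?scale1r.
Qed.

Lemma phia_theta_invK : cancel phia_theta_inv T.
Proof.
apply: (linear_xy_eq (f := T \o phia_theta_inv) (g := idfun)) => n m /=.
rewrite phia_theta_inv_xy !linearZ /= phia_theta_xy subrK scalerA.
by rewrite mulVf ?seqprod_neq0 ?scale1r.
Qed.

Lemma conj_phis q s beta :
  T \o phis q s beta \o phia_theta_inv =1 phis q s (conjseq alpha beta s r).
Proof.
apply: (linear_xy_eq (f := T \o phis q s beta \o phia_theta_inv)
                     (g := phis q s (conjseq alpha beta s r))) => n m /=.
rewrite phia_theta_inv_xy linearZ /= [in RHS]phis_xy phis_xy.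
rewrite -(conj_phis_on beta q s alpha_neq0 (T := T) phia_theta_xy).
exact: (linearZ_LR T).
Qed.

Lemma conj_phis_left_inverse q s beta G : cancel T G ->
  T \o phis q s beta \o G =1 phis q s (conjseq alpha beta s r).
Proof.
move=> TG x; rewrite -conj_phis /=.
by rewrite (canLR TG (esym (phia_theta_invK x))).
Qed.

End Conjugation.

Theorem lemma3p16 (k : fieldType) (q : k) (hq0 : q != 0)
  (hqroot : forall n : nat, (0 < n)%N -> q ^+ n != 1)
  (alpha beta : int -> k) (r : int) (s : nat)
  (halpha : forall n, alpha n != 0) (hs : (1 < s)%N) :
  (exists G : Hsp k -> Hsp k,
      cancel (phia alpha \o theta r) G /\ cancel G (phia alpha \o theta r)) /\
  (forall G : Hsp k -> Hsp k,
      cancel (phia alpha \o theta r) G -> cancel G (phia alpha \o theta r) ->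
      (phia alpha \o theta r) \o phis q s beta \o G
        =1 phis q s (conjseq alpha beta s r)) /\
  (forall G : Hsp k -> Hsp k,
      cancel (phia alpha) G -> cancel G (phia alpha) ->
      phia alpha \o phis q s beta \o G =1 phis q s (conjseq alpha beta s 0)).
Proof.
split.
  by exists (phia_theta_inv alpha r); split; [exact: phia_thetaK | exact: phia_theta_invK].
split=> [G TG _|G phiaG _ x]; first exact: conj_phis_left_inverse.
have TG : cancel (phia alpha \o theta 0) G by move=> y /=; rewrite theta0.
by rewrite -(conj_phis_left_inverse halpha q s beta TG x) /= theta0.
Qed.
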